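(* Assume the standing hypotheses (H). Let $t$ be an integer with $t\ge k_3/3$. Let $A$ be a part of $G$ with $|A|=4$, let $\{u,v\}\subseteq A$ be a good pair for $A$, and let $\{y,z\}=A\setminus\{u,v\}$. Then \[\bigl|(L(u)\cap L(v))\cup L(y)\cup L(z)\bigr|\ \ge\ n-t-k_4 .\]
   Context: A list assignment $L$ assigns to each vertex $v$ a set $L(v)$ of colors; an $L$-coloring is a proper coloring $f$ with $f(v)\in L(v)$ for all $v$; $\mathrm{ch}$ denotes choice number and $\chi$ chromatic number. A part of a complete multipartite graph is one of its maximal stable sets. Standing hypotheses (H): $k\ge1$ and $n\ge 2k+2$ are integers; $G$ is a complete $k$-partite graph (exactly $k$ nonempty parts) on $n$ vertices; $L$ is a list assignment for $G$ with $|L(v)|\ge\lceil (n+k-1)/3\rceil$ for every vertex $v$; $G$ has no $L$-coloring; $\left|\bigcup_{v\in V(G)}L(v)\right|\le n-1$; and every graph $H$ with fewer than $n$ vertices satisfies $\mathrm{ch}(H)\le\max\{\chi(H),\lceil(|V(H)|+\chi(H)-1)/3\rceil\}$. For $i\in\{1,2,3,4\}$, $k_i$ denotes the number of parts of $G$ of size $i$. For a part $A$ with $|A|\ge3$, a pair $\{u,v\}\subseteq A$ of distinct vertices is a good pair for $A$ if either $|A|=3$ and $|L(u)\cap L(v)|\ge\frac{k_1+k_4+1}{3}$, or $|A|=4$ and $|L(u)\cap L(v)|\ge|L(w)\cap L(z)|$ where $\{w,z\}=A\setminus\{u,v\}$. *)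

From mathcomp Require Import all_boot.
Set Implicit Arguments. Unset Strict Implicit. Unset Printing Implicit Defensive.

(* A (simple) graph on a finite vertex type T is a symmetric irreflexive
   relation e : rel T. *)

Definition colorableb (T : finType) (e : rel T) (c : nat) : bool :=
  [exists f : {ffun T -> 'I_c}, [forall x, [forall y, e x y ==> (f x != f y)]]].

(* chromatic number: least c <= #|T| such that e is c-colourable
   (for loopless graphs such a c always exists, so this is chi). *)
Definition chi (T : finType) (e : rel T) : nat :=
  \big[minn/#|T|]_(c < #|T|.+1 | colorableb e c) (c : nat).

Definition L_coloring (T C : finType) (e : rel T) (L : T -> {set C}) (f : T -> C) : Prop :=
  (forall v, f v \in L v) /\ (forall x y, e x y -> f x != f y).

Definition choosable (T : finType) (e : rel T) (c : nat) : Prop :=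
  forall (C : finType) (L : T -> {set C}),
    (forall v, c <= #|L v|) -> exists f : T -> C, L_coloring e L f.

Definition cdiv3 (a : nat) : nat := (a + 2) %/ 3.

Definition kpart_rel (T : finType) (k : nat) (p : T -> 'I_k) : rel T :=
  fun x y => p x != p y.

Definition part (T : finType) (k : nat) (p : T -> 'I_k) (a : 'I_k) : {set T} :=
  [set x | p x == a].

Definition nparts (T : finType) (k : nat) (p : T -> 'I_k) (j : nat) : nat :=
  #|[set a : 'I_k | #|part p a| == j]|.

From mathcomp Require Import all_boot zify.

(* Let G be the complete k-partite graph given by p, with lists L of size at
   least c = ceil((n+k-1)/3), no L-colouring, at most n-1 colours in total,
   and every smaller graph satisfying the choosability bound.  The proof has
   three steps.
   1. Minimality: no colour lies in the lists of three vertices of one part.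
      Otherwise delete those three vertices and that colour; the remaining
      graph has n-3 vertices, chromatic number at most k and lists of size at
      least c-1, so it is colourable by minimality, and giving the deleted
      vertices the deleted colour extends this to an L-colouring of G.
   2. Counting: hence the lists of one part have total size at most twice the
      number of colours, so |A| c <= 2(n-1) for each part A, which forces
      |A| <= 4 and n <= 2k + k_3 + 2 k_4.
   3. For the part {u,v,y,z}, step 1 makes L(u) /\ L(v) disjoint from
      L(y) \/ L(z); with the good-pair inequality the union in question has at
      least |L(y)| + |L(z)| >= 2c colours, and 2c >= n - t - k_4 by step 2. *)

Lemma bigmin_le {I : eqType} {s : seq I} {P : pred I} {F : I -> nat} {x : nat} {i0 : I} :
  i0 \in s -> P i0 -> \big[minn/x]_(i <- s | P i) F i <= F i0.
Proof.
elim: s => [|j s IH] //=; rewrite inE big_cons => /orP[/eqP<- -> | si0 Pi0].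
  exact: geq_minl.
by case: (P j); rewrite ?geq_min IH ?orbT.
Qed.

Lemma chi_le (T : finType) (e : rel T) (c : nat) : colorableb e c -> chi e <= c.
Proof.
move=> ec; rewrite /chi.
have [cT | Tc] := leqP c #|T|.
  have c_lt : c < #|T|.+1 by [].
  exact: bigmin_le (mem_index_enum (Ordinal c_lt)) _.
apply: leq_trans (ltnW Tc).
elim/big_ind: _ => // [x y xT yT | i _]; first by rewrite geq_min xT.
by rewrite -ltnS.
Qed.

Lemma chi_kpart {U : finType} {k : nat} (q : U -> 'I_k) : chi (kpart_rel q) <= k.
Proof.
apply: chi_le; apply/existsP; exists [ffun x => q x].
by apply/forallP => x; apply/forallP => y; apply/implyP; rewrite !ffunE.
Qed.

Lemma cdiv3_ge a : a <= 3 * cdiv3 a.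
Proof. rewrite /cdiv3; lia. Qed.

(* After deleting three vertices of a graph on n >= 2k+2 vertices with chi <= k,
   the choosability bound of the smaller graph is below ceil((n+k-1)/3). *)
Lemma bound_after_deletion {k m n x : nat} :
  2 * k + 2 <= n -> m + 3 <= n -> x <= k ->
  maxn x (cdiv3 (m + x - 1)) < cdiv3 (n + k - 1).
Proof.
by move=> kn mn xk; rewrite gtn_max /cdiv3; apply/andP; split; lia.
Qed.

Lemma card_parts {T : finType} {k : nat} (p : T -> 'I_k) :
  #|T| = \sum_(a < k) #|part p a|.
Proof.
rewrite -sum1_card (partition_big p predT) //=; apply: eq_bigr => a _.
by rewrite -sum1_card; apply: eq_bigl => x; rewrite !inE.
Qed.

Lemma nparts_sum {T : finType} {k : nat} (p : T -> 'I_k) (j : nat) :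
  nparts p j = \sum_(a < k) (#|part p a| == j).
Proof.
rewrite /nparts -sum1_card big_mkcond /=; apply: eq_bigr => a _.
by rewrite !inE; case: (_ == j).
Qed.

Section MinimalCounterexample.

Context {k n : nat} {T : finType} {p : T -> 'I_k} {C : finType} {L : T -> {set C}}.
Hypothesis hk : 1 <= k.
Hypothesis hn : 2 * k + 2 <= n.
Hypothesis hT : #|T| = n.
Hypothesis hL : forall v, cdiv3 (n + k - 1) <= #|L v|.
Hypothesis hnocol : ~ exists f : T -> C, L_coloring (kpart_rel p) L f.
Hypothesis hunion : #|\bigcup_(v : T) L v| <= n - 1.
Hypothesis hmin : forall (m : nat) (e : rel 'I_m), m < n -> symmetric e ->
  irreflexive e -> choosable e (maxn (chi e) (cdiv3 (m + chi e - 1))).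

(* Minimality: deleting at least three vertices and one colour col leaves a
   graph that can be coloured from the lists L x minus col. *)
Lemma colouring_outside (D : {set T}) (col : C) : 3 <= #|D| ->
  exists f : T -> C,
    (forall x, x \notin D -> f x \in L x :\ col) /\
    (forall x y, x \notin D -> y \notin D -> p x != p y -> f x != f y).
Proof.
move=> D3; pose U := {x : T | x \notin D}; set m := #|{: U}|.
have mn : m + 3 <= n.
  have -> : m = #|~: D| by rewrite /m card_sig; apply: eq_card => x; rewrite !inE.
  by rewrite -hT -(cardsC D) [X in _ <= X]addnC leq_add2l.
(* The remaining vertices, enumerated by 'I_m, induce the multipartite graph e;
   minimality colours it from the lists with col removed. *)
pose g (i : 'I_m) : T := val (enum_val i).
pose e := kpart_rel (fun i => p (g i)).
have esym : symmetric e by move=> i j; rewrite /e /kpart_rel eq_sym.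
have eirr : irreflexive e by move=> i; rewrite /e /kpart_rel eqxx.
have mlt : m < n by clear -mn; lia.
have [|f' [f'L f'e]] := @hmin m e mlt esym eirr C (fun i => L (g i) :\ col).
  move=> i; have Li := hL (g i); rewrite (cardsD1 col) in Li.
  have := bound_after_deletion hn mn (chi_kpart (fun i => p (g i))).
  by rewrite -/e; clear -Li; lia.
exists (fun x => if insub x : option U is Some x' then f' (enum_rank x') else col).
split=> [x xD | x y xD yD pxy].
  rewrite (insubT [pred x | x \notin D] xD).
  by have := f'L (enum_rank (Sub x xD)); rewrite /g enum_rankK.
rewrite (insubT [pred x | x \notin D] xD) (insubT [pred x | x \notin D] yD).
apply: f'e.
by rewrite /e /kpart_rel /g !enum_rankK.
Qed.

Lemma no_colour_in_three_lists {x1 x2 x3 : T} {col : C} :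
  x1 != x2 -> x2 != x3 -> x3 != x1 -> p x1 = p x2 -> p x2 = p x3 ->
  col \in L x1 -> col \in L x2 -> col \in L x3 -> False.
Proof.
move=> n12 n23 n31 p12 p23 c1 c2 c3.
set D := [set x1; x2; x3].
have D3 : 2 < #|D|.
  by apply/card_gt2P; exists x1, x2, x3; rewrite !inE !eqxx ?orbT.
have pD x : x \in D -> p x = p x1.
  by rewrite /D !inE => /orP[/orP[]|] /eqP ->; rewrite ?p12 ?p23.
have cD x : x \in D -> col \in L x by rewrite /D !inE => /orP[/orP[]|] /eqP ->.
have [f [fL fe]] := colouring_outside D col D3.
apply: hnocol; exists (fun x => if x \in D then col else f x); split=> [x | x y].
  by case: ifPn => [/cD | /fL /setD1P[]].
rewrite /kpart_rel; case: ifPn => [xD | xD]; case: ifPn => [yD | yD] pxy.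
- by move: pxy; rewrite (pD _ xD) (pD _ yD) eqxx.
- by have /setD1P[] := fL _ yD; rewrite eq_sym.
- by have /setD1P[] := fL _ xD.
- exact: fe.
Qed.

Lemma colour_in_two_lists (a : 'I_k) (col : C) :
  #|[set w in part p a | col \in L w]| <= 2.
Proof.
rewrite leqNgt; apply/card_gt2P => -[x1 [x2 [x3 [[h1 h2 h3] [n12 n23 n31]]]]].
move: h1 h2 h3; rewrite !inE => /andP[/eqP p1 c1] /andP[/eqP p2 c2] /andP[/eqP p3 c3].
have p12 : p x1 = p x2 by rewrite p1 p2.
have p23 : p x2 = p x3 by rewrite p2 p3.
exact: (no_colour_in_three_lists n12 n23 n31 p12 p23 c1 c2 c3).
Qed.

(* Double counting pairs (vertex of the part, colour of its list). *)
Lemma part_lists_sum (a : 'I_k) :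
  \sum_(w in part p a) #|L w| <= 2 * #|\bigcup_(v : T) L v|.
Proof.
rewrite (eq_bigr (fun w => \sum_(col in \bigcup_(v : T) L v) (col \in L w))).
  rewrite exchange_big /= mulnC -sum_nat_const; apply: leq_sum => col _.
  apply: leq_trans (colour_in_two_lists a col).
  rewrite -sum1_card [X in _ <= X]big_mkcond [X in X <= _]big_mkcond /=.
  apply: leq_sum => w _.
  by rewrite !inE; case: (p w == a); case: (col \in L w).
move=> w _; rewrite -sum1_card [LHS]big_mkcond [RHS]big_mkcond /=.
apply: eq_bigr => col _; case cw: (col \in L w); rewrite ?if_same //.
by rewrite ifT //; apply/bigcupP; exists w.
Qed.

Lemma part_size_bound (b : 'I_k) : #|part p b| * cdiv3 (n + k - 1) <= 2 * (n - 1).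
Proof.
apply: leq_trans (leq_mul (leqnn 2) hunion).
apply: leq_trans (part_lists_sum b); rewrite -sum_nat_const.
exact: leq_sum.
Qed.

(* Parts have at most four vertices: six would exceed the bound of
   part_size_bound outright, and then n <= 5k rules out five. *)
Lemma part_size_le4 (b : 'I_k) : #|part p b| <= 4.
Proof.
have c3 := cdiv3_ge (n + k - 1).
have le5 b' : #|part p b'| <= 5.
  rewrite leqNgt; apply/negP => gt5.
  have := leq_mul gt5 (leqnn (cdiv3 (n + k - 1))); have := part_size_bound b'.
  lia.
have n5k : n <= 5 * k.
  rewrite -hT (card_parts p) mulnC -[k in k * 5]card_ord -sum_nat_const.
  by apply: leq_sum => b' _; apply: le5.
have := part_size_bound b; have := le5 b.
rewrite leq_eqVlt => /orP[/eqP -> | ]; lia.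
Qed.

Lemma vertex_count : n <= 2 * k + nparts p 3 + 2 * nparts p 4.
Proof.
rewrite !nparts_sum [2 * k]mulnC -[k in k * 2]card_ord -sum_nat_const.
rewrite !big_distrr -!big_split /= -hT (card_parts p); apply: leq_sum => b _.
by have := part_size_le4 b; case: #|part p b| => [|[|[|[|[|]]]]].
Qed.

Lemma common_colours_disjoint (u v w : T) :
  u != v -> v != w -> w != u -> p u = p v -> p v = p w ->
  [disjoint L u :&: L v & L w].
Proof.
move=> nuv nvw nwu puv pvw; apply/pred0P => col /=; apply/negP.
rewrite !inE => /andP[/andP[cu cv] cw].
exact: (no_colour_in_three_lists nuv nvw nwu puv pvw cu cv cw).
Qed.

End MinimalCounterexample.

Lemma card_union_disjoint {X : finType} {I Y Z : {set X}} :
  [disjoint I & Y] -> [disjoint I & Z] ->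
  #|I :|: Y :|: Z| + #|Y :&: Z| = #|I| + #|Y| + #|Z|.
Proof.
move=> dIY dIZ.
rewrite -setUA (cardsU I) setIUr (disjoint_setI0 dIY) (disjoint_setI0 dIZ).
rewrite setU0 cards0 subn0.
by rewrite -addnA cardsUI addnA.
Qed.

Theorem lemma24
  (k n : nat) (T : finType) (p : T -> 'I_k) (C : finType) (L : T -> {set C})
  (hk : 1 <= k) (hn : 2 * k + 2 <= n) (hT : #|T| = n)
  (hsurj : forall a : 'I_k, exists x : T, p x = a)
  (hL : forall v, cdiv3 (n + k - 1) <= #|L v|)
  (hnocol : ~ exists f : T -> C, L_coloring (kpart_rel p) L f)
  (hunion : #|\bigcup_(v : T) L v| <= n - 1)
  (hmin : forall (m : nat) (e : rel 'I_m), m < n -> symmetric e -> irreflexive e ->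
            choosable e (maxn (chi e) (cdiv3 (m + chi e - 1))))
  (t : nat) (ht : nparts p 3 <= 3 * t)
  (a : 'I_k) (hA : #|part p a| = 4)
  (u v y z : T) (hu : p u = a) (hv : p v = a) (hy : p y = a) (hz : p z = a)
  (hdist : uniq [:: u; v; y; z])
  (hgood : #|L y :&: L z| <= #|L u :&: L v|) :
  n <= #|(L u :&: L v) :|: L y :|: L z| + t + nparts p 4.
Proof.
move: hdist; rewrite /= !inE !negb_or => /and4P[/and3P[nuv nuy nuz] /andP[nvy nvz] nyz _].
have disj := common_colours_disjoint hn hT hL hnocol hmin.
have puv : p u = p v by rewrite hu hv.
have dy : [disjoint L u :&: L v & L y].
  by apply: (disj _ _ _ nuv nvy _ puv); rewrite 1?eq_sym // hv hy.
have dz : [disjoint L u :&: L v & L z].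
  by apply: (disj _ _ _ nuv nvz _ puv); rewrite 1?eq_sym // hv hz.
have count := vertex_count hk hn hT hL hnocol hunion hmin.
(* By the good-pair inequality the union has at least |L y| + |L z| >= 2c
   colours, and 3c >= n + k - 1 with n <= 2k + 3t + 2k_4 gives 2c + t + k_4 >= n. *)
have := card_union_disjoint dy dz; have := cdiv3_ge (n + k - 1).
have := hL y; have := hL z; lia.
Qed.
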